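(* The class of data languages accepted by SAFA is closed under union: for any SAFA $M_1$ and $M_2$ over the same $\Sigma\times D$, there is a SAFA $M_3$ with $L(M_3)=L(M_1)\cup L(M_2)$.
   Context: $D$ is a fixed countably infinite set of data values; for a finite alphabet $\Sigma$, data words are elements of $(\Sigma\times D)^*$. A set augmented finite automaton (SAFA) is a tuple $M=(Q,\Sigma\times D,q_0,F,H,\delta)$: $Q$ finite set of states, $q_0\in Q$ initial, $F\subseteq Q$ final, $H=\{h_1,\dots,h_m\}$ a finite collection of (names of) sets of data values, $\delta\subseteq Q\times\Sigma\times C\times OP\times Q$ with $C=\{p(h_i),\,!p(h_i): h_i\in H\}$, $OP=\{-\}\cup\{\mathsf{ins}(h_i):h_i\in H\}$. Configurations are $(q,\langle S_1,\dots,S_m\rangle)$ with $S_i\subseteq D$ finite; initially state $q_0$ and all sets empty. On reading $(a,d)$, a transition $(q,a,\alpha,op,q')$ from the current state may be taken if $\alpha=p(h_i)$ and $d\in S_i$, or $\alpha=\,!p(h_i)$ and $d\notin S_i$; then the state becomes $q'$ and if $op=\mathsf{ins}(h_j)$ the value $d$ is added to $S_j$ ($op=-$ changes nothing). A word is accepted if some run reads it entirely and ends in $F$; $L(M)$ is the set of accepted words. *)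

From mathcomp Require Import all_boot.
From Stdlib Require Lists.List.
Set Implicit Arguments. Unset Strict Implicit. Unset Printing Implicit Defensive.

Inductive cond (m : nat) := CIn of 'I_m | CNotIn of 'I_m.
Inductive op (m : nat) := NoOp | Ins of 'I_m.

Record SAFA (Sigma D : Type) := {
  state : finType;
  nsets : nat;
  q0 : state;
  final : pred state;
  delta : seq (state * Sigma * cond nsets * op nsets * state)
}.

Section Sem.
Variables (Sigma : eqType) (D : eqType).
Variable M : SAFA Sigma D.

(* configurations: state and a tuple of finite sets of data values (as lists) *)
Definition config := (state M * ('I_(nsets M) -> seq D))%type.

Definition holds (c : cond (nsets M)) (S : 'I_(nsets M) -> seq D) (d : D) : bool :=
  match c with CIn i => d \in S i | CNotIn i => d \notin S i end.

Definition apply_op (o : op (nsets M)) (S : 'I_(nsets M) -> seq D) (d : D)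
  : 'I_(nsets M) -> seq D :=
  match o with NoOp => S | Ins j => fun i => if i == j then d :: S i else S i end.

Definition step (c : config) (ad : Sigma * D) (c' : config) : Prop :=
  exists q' al o, Stdlib.Lists.List.In (c.1, ad.1, al, o, q') (delta M) /\
    holds al c.2 ad.2 /\ c'.1 = q' /\ c'.2 = apply_op o c.2 ad.2.

Fixpoint acc_from (c : config) (w : seq (Sigma * D)) : Prop :=
  match w with
  | [::] => @final Sigma D M c.1
  | ad :: w' => exists c', step c ad c' /\ acc_from c' w'
  end.

Definition init_config : config := (q0 M, fun _ => [::]).

Definition lang (w : seq (Sigma * D)) : Prop := acc_from init_config w.
End Sem.

Definition countably_infinite (D : countType) : Prop :=
  exists f : nat -> D, injective f.

(* The union automaton runs both machines side by side: its states are those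
   of [M1] and [M2] plus a fresh initial state, its sets are the sets of [M1]
   followed by those of [M2], and each machine only tests and updates its own
   block.  The fresh initial state carries copies of the initial transitions of
   both machines.  Viewing every state of the union as a state of [M1], of
   [M2], or (the fresh one) of both, an induction on the word shows that the
   union accepts from a configuration iff one of the machines accepts from its
   view of it, with the sets restricted to its own block. *)

From mathcomp Require Import all_boot.
From Stdlib Require List.

Set Implicit Arguments.
Unset Strict Implicit.
Unset Printing Implicit Defensive.

Definition cond_map m n (g : 'I_m -> 'I_n) (c : cond m) : cond n :=
  match c with CIn i => CIn (g i) | CNotIn i => CNotIn (g i) end.

Definition op_map m n (g : 'I_m -> 'I_n) (o : op m) : op n :=
  match o with NoOp => NoOp n | Ins i => Ins (g i) end.

Lemma In_enum (T : finType) (x : T) : List.In x (enum T).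
Proof.
have : x \in enum T by rewrite mem_enum.
elim: (enum T) => //= y s IH; rewrite in_cons => /orP [/eqP ->|]; auto.
Qed.

Section Lift.
Variables (Sigma D : eqType) (M : SAFA Sigma D) (T : finType) (n : nat).
Variables (view : T -> option (state M)) (emb : state M -> T).
Variable g : 'I_(nsets M) -> 'I_n.

Definition lift_trans (s : T)
    (t : state M * Sigma * cond (nsets M) * op (nsets M) * state M)
  : T * Sigma * cond n * op n * T :=
  let '(_, a, c, o, q') := t in (s, a, cond_map g c, op_map g o, emb q').

Definition lift_delta : seq (T * Sigma * cond n * op n * T) :=
  List.flat_map (fun s => List.map (lift_trans s)
    (List.filter (fun t => view s == Some t.1.1.1.1) (delta M))) (enum T).

Lemma In_lift_delta s a c o s' :
  List.In (s, a, c, o, s') lift_delta <->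
  exists q c1 o1 q', [/\ view s = Some q, List.In (q, a, c1, o1, q') (delta M),
    c = cond_map g c1, o = op_map g o1 & s' = emb q'].
Proof.
rewrite List.in_flat_map; split.
  move=> [s0 [_ /List.in_map_iff [[[[[q a1] c1] o1] q'] [[<- <- <- <- <-]]]]].
  by move=> /List.filter_In [Hin /eqP Hv]; exists q, c1, o1, q'.
move=> [q [c1 [o1 [q' [Hv Hin -> -> ->]]]]].
exists s; split; first exact: In_enum.
apply/List.in_map_iff; exists (q, a, c1, o1, q'); split => //.
by apply/List.filter_In; rewrite Hv eqxx.
Qed.

End Lift.

Section Acceptance.
Variables (Sigma D : eqType) (M : SAFA Sigma D).

Definition acc_via
    (l : seq (state M * Sigma * cond (nsets M) * op (nsets M) * state M))
    (c : config M) (ad : Sigma * D) (w : seq (Sigma * D)) : Prop :=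
  exists q' al o, [/\ List.In (c.1, ad.1, al, o, q') l, holds al c.2 ad.2
    & acc_from (q', apply_op o c.2 ad.2) w].

Lemma acc_from_cons c ad w : acc_from c (ad :: w) <-> acc_via (delta M) c ad w.
Proof.
split.
  move=> [[q' S'] [[q'' [al [o [Hin [Hh [/= -> ->]]]]]] Hacc]].
  by exists q'', al, o.
move=> [q' [al [o [Hin Hh Hacc]]]].
by exists (q', apply_op o c.2 ad.2); split => //; exists q', al, o.
Qed.

Lemma acc_via_cat l1 l2 c ad w :
  acc_via (l1 ++ l2) c ad w <-> acc_via l1 c ad w \/ acc_via l2 c ad w.
Proof.
split.
  by move=> [q' [al [o [/List.in_app_iff [] Hin Hh Hacc]]]]; [left|right];
    exists q', al, o.
case=> [] [q' [al [o [Hin Hh Hacc]]]]; exists q', al, o.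
  by split => //; apply/List.in_app_iff; left.
by split => //; apply/List.in_app_iff; right.
Qed.

Lemma eq_acc_from q (S1 S2 : 'I_(nsets M) -> seq D) w :
  S1 =1 S2 -> acc_from (q, S1) w -> acc_from (q, S2) w.
Proof.
elim: w q S1 S2 => [|ad w IH] q S1 S2 E //.
move=> /acc_from_cons [q' [al [o [Hin Hh Hacc]]]]; apply/acc_from_cons.
exists q', al, o; split => //; first by case: al {Hin} Hh => i /=; rewrite E.
by apply: IH Hacc => i; case: o {Hin} => [|j] /=; rewrite E.
Qed.

End Acceptance.

Section Embedding.
Variables (Sigma D : eqType) (M N : SAFA Sigma D).
Variable g : 'I_(nsets M) -> 'I_(nsets N).
Hypothesis g_inj : injective g.

Lemma holds_cond_map c S d : holds (cond_map g c) S d = holds c (S \o g) d.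
Proof. by case: c. Qed.

Lemma apply_op_map o S d :
  apply_op (op_map g o) S d \o g =1 apply_op o (S \o g) d.
Proof. by case: o => [|j] i //=; rewrite (inj_eq g_inj). Qed.

Variables (view : state N -> option (state M)) (emb : state M -> state N).
Variable w : seq (Sigma * D).
Hypothesis acc_from_emb :
  forall q S, acc_from (M := N) (emb q, S) w <-> acc_from (q, S \o g) w.

Lemma acc_via_lift s S ad :
  acc_via (lift_delta view emb g) (s, S) ad w <->
  oapp (fun q => acc_from (q, S \o g) (ad :: w)) False (view s).
Proof.
split.
  move=> [s' [al [o [/In_lift_delta [q [c [o1 [q' [-> Hin -> -> ->]]]]] Hh]]]].
  move=> /acc_from_emb Hacc; apply/acc_from_cons; exists q', c, o1.
  rewrite -holds_cond_map; split => //.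
  by apply: eq_acc_from Hacc; apply: apply_op_map.
case Hv: (view s) => [q|] //= /acc_from_cons [q' [c [o [Hin Hh Hacc]]]].
exists (emb q'), (cond_map g c), (op_map g o); split.
- by apply/In_lift_delta; exists q, c, o, q'.
- by rewrite holds_cond_map.
- by apply/acc_from_emb; apply: eq_acc_from Hacc => i; rewrite apply_op_map.
Qed.

End Embedding.

Section Union.
Variables (Sigma D : eqType) (M1 M2 : SAFA Sigma D).

Definition union_state := option (state M1 + state M2).

(* [None] is the fresh initial state, which behaves as both initial states. *)
Definition view1 (s : union_state) : option (state M1) :=
  match s with
  | None => Some (q0 M1) | Some (inl q) => Some q | Some (inr _) => None
  end.

Definition view2 (s : union_state) : option (state M2) :=
  match s with
  | None => Some (q0 M2) | Some (inr q) => Some q | Some (inl _) => None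
  end.

Definition union : SAFA Sigma D := {|
  state := union_state;
  nsets := nsets M1 + nsets M2;
  q0 := None;
  final := fun s =>
    oapp (@final _ _ M1) false (view1 s) ||
    oapp (@final _ _ M2) false (view2 s);
  delta :=
    lift_delta view1 (fun q => Some (inl q)) (lshift (nsets M2)) ++
    lift_delta view2 (fun q => Some (inr q)) (@rshift (nsets M1) (nsets M2)) |}.

Lemma acc_from_union w (s : union_state) S :
  acc_from (M := union) (s, S) w <->
  oapp (fun q => acc_from (q, S \o lshift _) w) False (view1 s) \/
  oapp (fun q => acc_from (q, S \o @rshift _ _) w) False (view2 s).
Proof.
elim: w s S => [|ad w IH] s S.
  rewrite /= -(rwP orP).
  by case: (view1 s) (view2 s) => [q1|] [q2|] //=; intuition.
rewrite acc_from_cons acc_via_cat !acc_via_lift //.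
- exact: rshift_inj.
- by move=> q S'; rewrite IH /=; tauto.
- exact: lshift_inj.
- by move=> q S'; rewrite IH /=; tauto.
Qed.

End Union.

Theorem lemma5 (Sigma : finType) (D : countType) (HD : countably_infinite D)
  (M1 M2 : SAFA Sigma D) :
  exists M3 : SAFA Sigma D,
    forall w : seq (Sigma * D), lang M3 w <-> (lang M1 w \/ lang M2 w).
Proof.
by exists (union M1 M2) => w; apply: (acc_from_union w None).
Qed.
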